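(* Let $G$ be a finite graph such that no connected component of $\mathcal{I}^1_{\mathrm{AR}}(G)$ is an even cycle. Then the partition $V_1,\dots,V_{\alpha(G)}$ of $V(\mathcal{I}^1_{\mathrm{AR}}(G))$, where $V_i$ is the set of independent sets of $G$ of size $i$, is the unique layering of $\mathcal{I}^1_{\mathrm{AR}}(G)$.
   Context: $\alpha(G)$ is the maximum size of an independent set of $G$. $\mathcal{I}^1_{\mathrm{AR}}(G)$ is the graph whose vertices are the nonempty independent sets of $G$, two being adjacent iff their symmetric difference has exactly one element. A layering of a graph $H$ is a partition of $V(H)$ into an ordered sequence of parts (layers) $V_1,\dots,V_p$ such that: (1) each layer is an independent set of $H$; (2) every edge of $H$ joins vertices in consecutive layers $V_i,V_{i+1}$; (3) for $2\le i\le p$, each vertex of $V_i$ has exactly $i$ neighbours in $V_{i-1}$; (4) for $1\le i\le p$, any two vertices of $V_i$ have at most one common neighbour in $V_{i-1}$ and at most one common neighbour in $V_{i+1}$. *)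

From mathcomp Require Import all_boot.
Set Implicit Arguments. Unset Strict Implicit. Unset Printing Implicit Defensive.

Definition simple_graph (T : finType) (e : rel T) : Prop :=
  symmetric e /\ irreflexive e.

Definition indep (T : finType) (e : rel T) (A : {set T}) : bool :=
  [forall x in A, forall y in A, ~~ e x y].

Definition alpha (T : finType) (e : rel T) : nat :=
  \max_(A : {set T} | indep e A) #|A|.

(* Vertices of I^1_AR(G): nonempty independent sets of G. *)
Definition IAR_vert (T : finType) (e : rel T) :=
  {A : {set T} | indep e A && (A != set0)}.

Definition IAR_adj (T : finType) (e : rel T) : rel (IAR_vert e) :=
  fun A B => #|(val A :\: val B) :|: (val B :\: val A)| == 1.

Definition component (V : finType) (adj : rel V) (v : V) : {set V} :=
  [set u | connect adj v u].

Definition induces_cycle (V : finType) (adj : rel V) (C : {set V}) (n : nat)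
  : Prop :=
  3 <= n /\
  exists f : 'I_n -> V,
    injective f /\ C = [set f i | i in 'I_n] /\
    (forall i j : 'I_n,
       adj (f i) (f j) <-> (j = (i + 1) %% n :> nat \/ i = (j + 1) %% n :> nat)).

Definition is_even_cycle (V : finType) (adj : rel V) (C : {set V}) : Prop :=
  exists n, ~~ odd n /\ induces_cycle adj C n.

(* A layering of H = (V, adj) with p layers, given as the layer-index map
   L : V -> nat (vertex v lies in layer V_(L v)), layers V_1, ..., V_p.
   The layers form a partition into nonempty parts. *)
Definition is_layering (V : finType) (adj : rel V) (p : nat) (L : V -> nat)
  : Prop :=
  (forall v, 1 <= L v <= p) /\
  (forall i, 1 <= i <= p -> exists v, L v = i) /\
  (forall u v, adj u v -> L u != L v) /\
  (forall u v, adj u v -> L v = (L u).+1 \/ L u = (L v).+1) /\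
  (* (3) each vertex of V_i, i >= 2, has exactly i neighbours in V_(i-1) *)
  (forall v, 2 <= L v -> #|[set u | adj v u & L u == (L v).-1]| = L v) /\
  (* (4) two vertices of V_i have at most one common neighbour in V_(i-1)
         and at most one common neighbour in V_(i+1) *)
  (forall u v, u != v -> L u = L v ->
     #|[set w | [&& adj u w, adj v w & L w == (L u).-1]]| <= 1 /\
     #|[set w | [&& adj u w, adj v w & L w == (L u).+1]]| <= 1).

From mathcomp Require Import all_boot zify.
Set Implicit Arguments. Unset Strict Implicit. Unset Printing Implicit Defensive.

(* The cardinality layering is one: consecutive layers differ by one element,
   and two sets of equal size have at most one common neighbour in each adjacent
   layer (their intersection, resp. their union).

   Conversely, let L be a layering.  Applied to the square A, c+A, y+A, c+y+A,
   condition (4) shows that adding c to A moves in the same direction as adding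
   c to y+A; hence the direction of adding c to B is the one of adding c to {x},
   for any x in B.  Let D(x) be the set of c such that {x, c} lies below {x}.
   If L{x} >= 2, condition (3) gives |D(x)| = L{x}, while adding an independent
   S included in D(x) to {x} descends |S| layers, so no independent subset of
   D(x) has L{x} elements.  Counting the lower neighbours of x+S, for S a
   maximal independent subset of D(x), shows that {z} lies above {x, z} for
   every z in D(x); counting at {x, z} then shows that D(x) is independent as
   soon as L{x} >= 3, which is absurd.  If L{x} = 2, the singletons in layer 2
   and the pairs in layer 1 have degree 2 and form whole components, which are
   bipartite, i.e. even cycles.  Hence every singleton lies in layer 1, every
   addition goes up, and L A = |A|. *)

(** * Two-regular bipartite components are even cycles *)

Section TwoRegularComponent.
Variables (V : finType) (adj : rel V).
Hypotheses (adj_sym : symmetric adj) (adj_irr : irreflexive adj).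
Variable colour : V -> bool.
Hypothesis colour_adj : forall u v, adj u v -> colour u != colour v.
Variable Q : pred V.
Hypothesis Q_deg2 : forall u, Q u -> #|[set w | adj u w]| = 2.
Hypothesis Q_adj : forall u w, Q u -> adj u w -> Q w.

Definition other (u w : V) : V := odflt u [pick y | adj u y && (y != w)].

Lemma otherP u w : Q u -> adj u w ->
  [/\ adj u (other u w), other u w != w &
      forall y, adj u y -> y = w \/ y = other u w].
Proof.
move=> /Q_deg2 /eqP /cards2P [a [b [ab nbrs]]] uw.
have nbrP y : adj u y = (y == a) || (y == b) by rewrite -in_set2 -nbrs inE.
rewrite /other; case: pickP => [y /andP [uy yw] | none] /=.
  split=> // y' uy'; move: uw uy uy' yw; rewrite !nbrP.
  by do 3!case/orP=> /eqP ->; rewrite ?eqxx //; auto.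
exfalso; move: uw (none a) (none b); rewrite !nbrP !eqxx orbT /=.
by case/orP => /eqP ->; rewrite ?eqxx /= ?(eq_sym b) ab.
Qed.

Variable v0 : V.
Hypothesis Qv0 : Q v0.

Definition v1 : V := odflt v0 [pick y | adj v0 y].

Lemma adj_v0v1 : adj v0 v1.
Proof.
rewrite /v1; case: pickP => [y // | none] /=.
move: (Q_deg2 Qv0); rewrite (_ : [set w | adj v0 w] = set0) ?cards0 //.
by apply/setP => y; rewrite !inE none.
Qed.

Fixpoint dart (n : nat) : V * V :=
  if n is n'.+1 then let d := dart n' in (d.2, other d.2 d.1) else (v0, v1).

Definition tour n := (dart n).1.

Lemma tourSS n : tour n.+2 = other (tour n.+1) (tour n).
Proof. by []. Qed.

Lemma tour_Q_adj n : Q (tour n) /\ adj (tour n) (tour n.+1).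
Proof.
elim: n => [|n [Qn an]]; first by split=> //; apply: adj_v0v1.
have Qn1 := Q_adj Qn an; split=> //.
by rewrite tourSS; case: (otherP Qn1 (_ : adj _ (tour n))); rewrite // adj_sym.
Qed.

Lemma tour_adj n : adj (tour n) (tour n.+1).
Proof. by case: (tour_Q_adj n). Qed.

Lemma tour_otherP n :
  tour n.+2 != tour n /\ forall y, adj (tour n.+1) y -> y = tour n \/ y = tour n.+2.
Proof.
have [Qn an] := tour_Q_adj n.
have back : adj (tour n.+1) (tour n) by rewrite adj_sym.
by have [] := otherP (Q_adj Qn an) back.
Qed.

Lemma connect_tour n : connect adj v0 (tour n).
Proof.
elim: n => [|n IH]; first exact: connect0.
exact: connect_trans IH (connect1 (tour_adj n)).
Qed.

Lemma colour_tour n : colour (tour n) = colour v0 (+) odd n.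
Proof.
elim: n => [|n IH] /=; first by rewrite addbF.
by move: (colour_adj (tour_adj n)); rewrite IH; case: (colour (tour n.+1));
  case: (colour v0); case: (odd n).
Qed.

Lemma tour_repeats : exists j, [exists i : 'I_j, tour i == tour j].
Proof.
have [/existsP [j rep] | norep] :=
  boolP [exists j : 'I_#|V|.+1, [exists i : 'I_j, tour i == tour j]].
  by exists j.
suff /leq_card : injective (fun i : 'I_#|V|.+1 => tour i) by rewrite card_ord ltnn.
have rep i j : i < j -> tour i = tour j -> j < #|V|.+1 -> False.
  move=> lt eij lj; case/existsP: norep; exists (Ordinal lj).
  by apply/existsP; exists (Ordinal lt); rewrite /= eij.
move=> i j eij; apply: val_inj.
by case: (ltngtP i j) => // lt; [case: (rep _ _ lt eij) | case: (rep _ _ lt (esym eij))].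
Qed.

Definition period := ex_minn tour_repeats.

Lemma periodP : (exists2 i, i < period & tour i = tour period) /\
  forall j i, j < period -> i < j -> tour i <> tour j.
Proof.
rewrite /period; case: ex_minnP => m /existsP [i0 /eqP rep] min; split.
  by exists i0.
move=> j i jm ij eij; suff /min : [exists i : 'I_j, tour i == tour j] by lia.
by apply/existsP; exists (Ordinal ij); rewrite /= eij.
Qed.

Lemma tour_inj i j : i < period -> j < period -> tour i = tour j -> i = j.
Proof.
have [_ min] := periodP.
by move=> ip jp eij; case: (ltngtP i j) => // lt; [case: (min j i) | case: (min i j)].
Qed.

(* The first repeated vertex is [v0]: repeating any later vertex would give it
   a third neighbour. *)
Lemma tour_period : tour period = tour 0.
Proof.
have [[[|i] ip rep] min] := periodP; first by [].
exfalso; have p1 : period = period.-1.+1 by lia.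
have : adj (tour i.+1) (tour period.-1) by rewrite rep adj_sym {2}p1 tour_adj.
case/(tour_otherP i).2 => prev.
  by apply: (min period.-1 i) (esym prev); lia.
case: (ltngtP i.+2 period.-1) => cmp.
- by apply: (min period.-1 i.+2) (esym prev); lia.
- have p2 : period = i.+2 by lia.
  by move: (tour_adj i.+1); rewrite -p2 -rep adj_irr.
- have p3 : period = i.+3 by lia.
  by move: (tour_otherP i.+1).1; rewrite -p3 -rep eqxx.
Qed.

Lemma period_gt2 : 2 < period.
Proof.
have [[i ip _] _] := periodP.
case p: period ip => [|[|[|q]]] // _.
- by move: (tour_adj 0); rewrite -tour_period p adj_irr.
- by move: (tour_otherP 0).1; rewrite -tour_period p eqxx.
Qed.

Lemma tour_periodS : tour period.+1 = tour 1.
Proof.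
have p1 : period = period.-1.+1 by have := period_gt2; lia.
have : adj (tour period.-1.+1) (tour 1) by rewrite -p1 tour_period tour_adj.
case/(tour_otherP _).2 => [e1|]; last by rewrite -p1.
by have := tour_inj (_ : 1 < period) (_ : period.-1 < period) e1; have := period_gt2; lia.
Qed.

Lemma tourD n : tour (n + period) = tour n.
Proof.
have dart_period : dart period = dart 0.
  rewrite [dart period]surjective_pairing; congr (_, _).
  - exact: tour_period.
  - exact: tour_periodS.
have dartD m : dart (m + period) = dart m by elim: m => //= m ->.
by rewrite /tour dartD.
Qed.

Lemma tour_mod n : tour n = tour (n %% period).
Proof.
rewrite {1}(divn_eq n period) addnC; elim: (n %/ period) => [|q IH].
  by rewrite addn0.
by rewrite mulSn addnCA addnC tourD.
Qed.

Lemma tour_nbrE n w : adj (tour n) w -> exists m, w = tour m.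
Proof.
rewrite -tourD (_ : n + period = (n + period.-1).+1); last by have := period_gt2; lia.
by case/(tour_otherP _).2 => ->; eexists.
Qed.

Lemma adj_tourE i j : i < period -> j < period ->
  adj (tour i) (tour j) <-> j = (i + 1) %% period \/ i = (j + 1) %% period.
Proof.
have p3 := period_gt2; have p0 : 0 < period by lia.
move=> ip jp; split=> [|[] ->]; first last.
- by rewrite -tour_mod addn1 adj_sym tour_adj.
- by rewrite -tour_mod addn1 tour_adj.
have ipS : i + period = (i + period.-1).+1 by lia.
have tour_modE n : tour j = tour n -> j = n %% period.
  by rewrite [tour n]tour_mod => /(tour_inj jp (ltn_pmod _ p0)).
rewrite -tourD ipS => /(tour_otherP _).2 [] /tour_modE -> ; [right | left].
- by rewrite modnDml addn1 -ipS modnDr modn_small.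
- by rewrite -ipS -addSn modnDr addn1.
Qed.

Lemma component_tour : component adj v0 = [set tour i | i : 'I_period].
Proof.
set C := [set tour i | i : 'I_period].
have C_nbr u w : adj u w -> u \in C -> w \in C.
  move=> uw /imsetP [i _ eu]; rewrite eu in uw; have [m ->] := tour_nbrE uw.
  have p0 : 0 < period by have := period_gt2; lia.
  by apply/imsetP; exists (Ordinal (ltn_pmod m p0)); rewrite // -tour_mod.
have C_closed : closed adj (mem C).
  by move=> u w uw; apply/idP/idP; apply: C_nbr; rewrite // adj_sym.
apply/setP => w; rewrite inE; apply/idP/idP => [/(closed_connect C_closed) <- |].
  by apply/imsetP; exists (Ordinal (leq_trans (isT : 0 < 3) period_gt2)).
by case/imsetP => i _ ->; apply: connect_tour.
Qed.

Lemma even_cycle_component : is_even_cycle adj (component adj v0).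
Proof.
exists period; split.
  by move: (colour_tour period); rewrite tour_period /=; case: (colour v0); case: (odd _).
split; first exact: period_gt2.
exists (fun i : 'I_period => tour i); split; last split.
- by move=> i j /(tour_inj (ltn_ord i) (ltn_ord j)) /val_inj.
- exact: component_tour.
- by move=> i j; apply: adj_tourE.
Qed.

End TwoRegularComponent.

(** * The independence complex and its cardinality layering *)

Lemma exists_subset_card (T : finType) (A : {set T}) n :
  n <= #|A| -> exists2 B : {set T}, B \subset A & #|B| = n.
Proof.
elim: n => [|n IH] ltnA; first by exists set0; rewrite ?sub0set ?cards0.
have [B sBA cB] := IH (ltnW ltnA).
have [a /setDP [aA aB]] : exists a, a \in A :\: B.
  by apply/card_gt0P; rewrite cardsD (setIidPr sBA) cB subn_gt0.
by exists (a |: B); rewrite ?cardsU1 ?aB ?cB // subUset sub1set aA.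
Qed.

Lemma card_setI_lt (T : finType) (A B : {set T}) :
  #|A| = #|B| -> A != B -> #|A :&: B| < #|A|.
Proof.
move=> cAB nAB; apply: proper_card; apply: properIl; apply: contra nAB => sAB.
by rewrite eqEcard sAB cAB /=.
Qed.

Lemma eq_setI_card (T : finType) (A B W : {set T}) : #|A| = #|B| -> #|W| = #|A|.-1 ->
  A != B -> W \subset A -> W \subset B -> W = A :&: B.
Proof.
move=> cAB cW nAB sWA sWB; apply/eqP; rewrite eqEcard subsetI sWA sWB /= cW.
by have := card_setI_lt cAB nAB; lia.
Qed.

Lemma eq_setU_card (T : finType) (A B W : {set T}) : #|A| = #|B| -> #|W| = #|A|.+1 ->
  A != B -> A \subset W -> B \subset W -> W = A :|: B.
Proof.
move=> cAB cW nAB sAW sBW; apply/eqP; rewrite eq_sym eqEcard subUset sAW sBW /= cW cardsU.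
by have := card_setI_lt cAB nAB; lia.
Qed.

Section IndependenceComplex.
Variables (T : finType) (e : rel T).
Hypotheses (e_sym : symmetric e) (e_irr : irreflexive e).

Local Notation V := (IAR_vert e).
Local Notation adjV := (@IAR_adj T e).
Implicit Types (S A B : {set T}) (x y z c : T).

Definition vtx S := indep e S && (S != set0).

Lemma indepP S : reflect {in S &, forall x y, ~~ e x y} (indep e S).
Proof.
apply: (iffP forall_inP) => [H x y xS yS | H x xS].
  by have /forall_inP := H x xS; apply.
by apply/forall_inP => y; apply: H.
Qed.

Lemma indepS S S' : indep e S -> S' \subset S -> indep e S'.
Proof.
move=> /indepP iS sS'.
by apply/indepP => x y /(subsetP sS') xS /(subsetP sS') yS; apply: iS.
Qed.

Lemma vtx_sub S S' : vtx S -> S' \subset S -> S' != set0 -> vtx S'.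
Proof. by move=> /andP [iS _] sS' S'0; rewrite /vtx S'0 andbT (indepS iS sS'). Qed.

Lemma vtx1 x : vtx [set x].
Proof.
by rewrite /vtx -cards_eq0 cards1 andbT; apply/indepP => a b /set1P -> /set1P ->; rewrite e_irr.
Qed.

Lemma vtxU1 S c : indep e S -> {in S, forall y, ~~ e c y} -> vtx (c |: S).
Proof.
move=> /indepP iS cS; rewrite /vtx andbC; apply/andP; split.
  by apply/set0Pn; exists c; rewrite setU11.
apply/indepP => a b /setU1P [-> | aS] /setU1P [-> | bS]; rewrite ?e_irr ?cS //.
  by rewrite e_sym cS.
exact: iS.
Qed.

Lemma vtxU1_nadj S c y : vtx (c |: S) -> y \in S -> ~~ e c y.
Proof. by move=> /andP [/indepP iS _] yS; apply: iS; rewrite !inE ?eqxx ?yS ?orbT. Qed.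

Lemma vtx2 x c : vtx (c |: [set x]) = ~~ e c x.
Proof.
apply/idP/idP => [/vtxU1_nadj -> // | ecx]; first by rewrite set11.
by apply: vtxU1 (andP (vtx1 x)).1 _ => y /set1P ->.
Qed.

Definition adjS S S' := #|(S :\: S') :|: (S' :\: S)| == 1.

Lemma adjSC S S' : adjS S S' = adjS S' S.
Proof. by rewrite /adjS setUC. Qed.

Lemma adjS_U1 S c : c \notin S -> adjS S (c |: S).
Proof.
move=> cS; apply/cards1P; exists c; apply/setP => y; rewrite !inE.
by case: (y =P c) => [-> | _]; rewrite ?(negbTE cS) //; case: (y \in S).
Qed.

Lemma adjS_D1 S b : b \in S -> adjS S (S :\ b).
Proof. by move=> bS; rewrite adjSC -{2}(setD1K bS) adjS_U1 // setD11. Qed.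

Lemma adjSP S S' : adjS S S' ->
  (exists2 c, c \notin S & S' = c |: S) \/ (exists2 b, b \in S & S' = S :\ b).
Proof.
move=> /cards1P [c symD].
have xorE y : (y \in S) (+) (y \in S') = (y == c).
  by rewrite -in_set1 -symD !inE; case: (y \in S); case: (y \in S').
have sameE y : y != c -> (y \in S') = (y \in S).
  by move=> yc; move: (xorE y); rewrite (negbTE yc); case: (y \in S); case: (y \in S').
have := xorE c; rewrite eqxx; case cS: (c \in S); case cS': (c \in S') => // _.
- right; exists c => //; apply/setP => y; rewrite !inE.
  by case: (y =P c) => [-> | /eqP yc] /=; rewrite ?cS' ?sameE.
- left; exists c; first by rewrite cS.
  apply/setP => y; rewrite !inE.
  by case: (y =P c) => [-> | /eqP yc] /=; rewrite ?cS' ?sameE.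
Qed.

Lemma adjS_card S S' : adjS S S' -> #|S'| = #|S|.+1 \/ #|S| = #|S'|.+1.
Proof.
case/adjSP => [[c cS ->] | [b bS ->]]; first by left; rewrite cardsU1 cS.
by right; rewrite (cardsD1 b S) bS.
Qed.

Lemma adjVE (u v : V) : adjV u v = adjS (val u) (val v).
Proof. by []. Qed.

Lemma adjV_sym : symmetric adjV.
Proof. by move=> u v; rewrite !adjVE adjSC. Qed.

Lemma adjV_irr : irreflexive adjV.
Proof. by move=> u; rewrite adjVE /adjS setDv setU0 cards0. Qed.

Lemma adjV_odd u v : adjV u v -> odd #|val u| != odd #|val v|.
Proof. by rewrite adjVE => /adjS_card [] -> /=; case: (odd _). Qed.

Definition vx S (vS : vtx S) : V := Sub S vS.

Lemma vxK S (vS : vtx S) : val (vx vS) = S.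
Proof. exact: SubK. Qed.

Lemma card_nbr_split (u : V) (P : {set T} -> bool) :
  #|[set w | adjV u w & P (val w)]| =
  #|[set b in val u | vtx (val u :\ b) && P (val u :\ b)]| +
  #|[set c | [&& c \notin val u, vtx (c |: val u) & P (c |: val u)]]|.
Proof.
set S := val u; set Bs := [set b in S | _]; set Cs := [set c | [&& c \notin S, _ & _]].
rewrite -(card_imset _ val_inj).
have -> : val @: [set w | adjV u w & P (val w)] =
    (fun b => S :\ b) @: Bs :|: (fun c => c |: S) @: Cs.
  apply/setP => W; apply/imsetP/setUP => [[w] | [] /imsetP [a]].
  - rewrite inE => /andP [uw Pw] ->; have vw : vtx (val w) := valP w.
    case/adjSP: uw => [[c cS ew] | [b bS ew]]; [right | left]; apply/imsetP.
    + by exists c; rewrite // inE cS -ew vw.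
    + by exists b; rewrite // inE bS -ew vw.
  - rewrite inE => /andP [aS /andP [va Pa]] ->.
    by exists (vx va); rewrite ?vxK // inE adjVE vxK Pa andbT adjS_D1.
  - rewrite inE => /and3P [aS va Pa] ->.
    by exists (vx va); rewrite ?vxK // inE adjVE vxK Pa andbT adjS_U1.
rewrite cardsU (_ : _ :&: _ = set0) ?cards0 ?subn0; last first.
  apply/setP => W; rewrite !inE; apply/negP => /andP [/imsetP [b] + ->].
  rewrite inE => /andP [bS _] /imsetP [c]; rewrite inE => /andP [cS _] /(congr1 (fun A => #|A|)).
  by rewrite cardsU1 cS (cardsD1 b S) bS; lia.
rewrite !card_in_imset // => [c1 c2 | b1 b2]; rewrite !inE.
  move=> /andP [c1S _] _ ec; have : c1 \in c2 |: S by rewrite -ec setU11.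
  by rewrite !inE (negbTE c1S) orbF => /eqP.
move=> /andP [b1S _] /andP [b2S _] eb; apply/eqP; apply: contraT => nb.
have : b1 \in S :\ b2 by rewrite !inE nb b1S.
by rewrite -eb setD11.
Qed.

Lemma alpha_max A : indep e A -> #|A| <= alpha e.
Proof. exact: leq_bigmax_cond. Qed.

Lemma alpha_witness : exists2 A, indep e A & #|A| = alpha e.
Proof.
have i0 : indep e set0 by apply/indepP => x y; rewrite inE.
have [A iA maxA] := arg_maxnP (fun A : {set T} => #|A|) i0.
exists A => //; apply/eqP; rewrite eqn_leq alpha_max //=.
by apply/bigmax_leqP => B; apply: maxA.
Qed.

Lemma adjS_subset S S' : adjS S S' -> #|S| < #|S'| -> S \subset S'.
Proof.
case/adjSP => [[c _ ->] _ | [b bS ->]]; first exact: subsetUr.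
by rewrite (cardsD1 b S) bS ltnNge leq_addl.
Qed.

Lemma common_lower_nbr (u v w : V) : u != v -> #|val u| = #|val v| ->
  adjV u w -> adjV v w -> #|val w| = #|val u|.-1 -> val w = val u :&: val v.
Proof.
move=> nuv cuv uw vw cw; have u0 : 0 < #|val u| by rewrite card_gt0; case/andP: (valP u).
have below (s : V) : adjV s w -> #|val s| = #|val u| -> val w \subset val s.
  by rewrite adjVE adjSC => /adjS_subset sw cs; apply: sw; lia.
have nuv' : val u != val v by rewrite (inj_eq val_inj).
exact: eq_setI_card cuv cw nuv' (below u uw (erefl _)) (below v vw (esym cuv)).
Qed.

Lemma common_upper_nbr (u v w : V) : u != v -> #|val u| = #|val v| ->
  adjV u w -> adjV v w -> #|val w| = #|val u|.+1 -> val w = val u :|: val v.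
Proof.
move=> nuv cuv uw vw cw.
have above (s : V) : adjV s w -> #|val s| = #|val u| -> val s \subset val w.
  by rewrite adjVE => /adjS_subset sw cs; apply: sw; lia.
have nuv' : val u != val v by rewrite (inj_eq val_inj).
exact: eq_setU_card cuv cw nuv' (above u uw (erefl _)) (above v vw (esym cuv)).
Qed.

Lemma natural_layering (L : V -> nat) :
  (forall u : V, L u = #|val u|) -> is_layering adjV (alpha e) L.
Proof.
move=> LE; split; [|split; [|split; [|split; [|split]]]].
- by move=> u; case/andP: (valP u) => iu nu; rewrite LE card_gt0 nu alpha_max.
- move=> i /andP [i1 ia]; have [A iA cA] := alpha_witness.
  have [|B sBA cB] := @exists_subset_card _ A i; first by rewrite cA.
  have vB : vtx B by rewrite /vtx -card_gt0 cB i1 andbT (indepS iA sBA).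
  by exists (vx vB); rewrite LE vxK.
- by move=> u v /adjS_card; rewrite !LE; lia.
- by move=> u v /adjS_card; rewrite !LE.
- move=> v; rewrite LE => k2.
  rewrite (_ : [set u | _] = [set w | adjV v w & #|val w| == #|val v|.-1]); last first.
    by apply/setP => w; rewrite !inE LE.
  rewrite (card_nbr_split v (fun W => #|W| == #|val v|.-1)).
  rewrite (_ : [set c | [&& c \notin val v, _ & _]] = set0) ?cards0 ?addn0; last first.
    apply/setP => c; rewrite !inE; apply/negP => /and3P [cv _].
    by rewrite cardsU1 cv add1n gtn_eqF // ltnS leq_pred.
  rewrite (_ : [set b in val v | _] = val v) //.
  apply/setP => b; rewrite inE andb_idr // => bv.
  have cb : #|val v :\ b| = #|val v|.-1 by move: (cardsD1 b (val v)); rewrite bv; lia.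
  rewrite cb eqxx andbT; apply: vtx_sub (valP v) (subsetDl _ _) _.
  by rewrite -card_gt0 cb -subn1 subn_gt0.
- move=> u v nuv; rewrite !LE => cuv; split; apply/card_le1_eqP => w1 w2;
    rewrite !inE !LE => /and3P [uw1 vw1 /eqP c1] /and3P [uw2 vw2 /eqP c2]; apply: val_inj.
  + by rewrite (common_lower_nbr nuv cuv uw1 vw1 c1) (common_lower_nbr nuv cuv uw2 vw2 c2).
  + by rewrite (common_upper_nbr nuv cuv uw1 vw1 c1) (common_upper_nbr nuv cuv uw2 vw2 c2).
Qed.

Lemma layering_card_alpha p (L : V -> nat) : is_layering adjV p L ->
  (forall u : V, L u = #|val u|) -> p = alpha e.
Proof.
case=> L_range [L_onto _] LE; apply/eqP; rewrite eqn_leq; apply/andP; split.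
  case: p L_range L_onto => // q _ /(_ q.+1 (leqnn _)) [v <-].
  by rewrite LE alpha_max //; case/andP: (valP v).
have [A iA <-] := alpha_witness; have [-> | nA] := eqVneq A set0; first by rewrite cards0.
have vA : vtx A by apply/andP.
by have /andP [_] := L_range (vx vA); rewrite LE vxK.
Qed.

(** * Uniqueness of the layering *)

Lemma vtxU1_sub S B c : vtx S -> c \in S -> B \subset S -> vtx (c |: B).
Proof.
move=> vS cS sB; apply: vtx_sub vS _ _; first by rewrite subUset sub1set cS sB.
by apply/set0Pn; exists c; rewrite setU11.
Qed.

Lemma consecutive_eqE m n : m = n.+1 \/ n = m.+1 ->
  (n == m.-1) = (m == n.+1) /\ (m == n.-1) = ~~ (m == n.+1).
Proof. by case=> ->; split; apply/idP/idP; lia. Qed.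

Section Layering.
Variables (p : nat) (L : V -> nat).
Hypothesis L_layering : is_layering adjV p L.

(* [L] read on arbitrary sets, with junk value 0 off the vertices. *)
Definition Lset S := if insub S is Some u then L u else 0.

Lemma LsetE (u : V) : Lset (val u) = L u.
Proof. by rewrite /Lset valK. Qed.

Lemma Lvx S (vS : vtx S) : L (vx vS) = Lset S.
Proof. by rewrite -LsetE vxK. Qed.

Lemma Lset_gt0 S : vtx S -> 0 < Lset S.
Proof. by move=> vS; rewrite -(Lvx vS); case: L_layering => /(_ (vx vS)) /andP []. Qed.

Lemma Lset_step S c : vtx S -> c \notin S -> vtx (c |: S) ->
  Lset (c |: S) = (Lset S).+1 \/ Lset S = (Lset (c |: S)).+1.
Proof.
move=> vS cS vcS; rewrite -(Lvx vS) -(Lvx vcS).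
by case: L_layering => _ [_ [_ [consec _]]]; apply: consec; rewrite adjVE !vxK adjS_U1.
Qed.

Definition up S c := Lset (c |: S) == (Lset S).+1.

Lemma Lset_down S c : vtx S -> c \notin S -> vtx (c |: S) -> ~~ up S c ->
  Lset S = (Lset (c |: S)).+1.
Proof.
by move=> vS cS vcS; rewrite /up; case: (Lset_step vS cS vcS) => [-> | //]; rewrite eqxx.
Qed.

Lemma common_nbrs_layers (a b c d : V) : b != c -> a != d ->
  adjV b a -> adjV c a -> adjV b d -> adjV c d -> L b = L c -> L a = L d -> False.
Proof.
move=> nbc nad ba ca bd cd ebc ead.
case: L_layering => _ [_ [_ [consec [_ common]]]]; have [lo hi] := common b c nbc ebc.
have two k : L a = k -> #|[set w | [&& adjV b w, adjV c w & L w == k]]| <= 1 -> False.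
  move=> eak; apply/negP; rewrite -ltnNge.
  apply: leq_trans (subset_leq_card (_ : [set a; d] \subset _)); first by rewrite cards2 nad.
  by apply/subsetP => w /set2P [] ->; rewrite inE ?ba ?ca ?bd ?cd -?ead eak eqxx.
by case: (consec _ _ ba) => eba; [apply: two hi | apply: two lo]; rewrite eba.
Qed.

(* In the square A, c+A, y+A, c+y+A the edges through c are parallel, since
   otherwise c+A and y+A would share both A and c+y+A as neighbours in one layer. *)
Lemma up_square A c y : vtx A -> c \notin A -> y \notin A -> c != y ->
  vtx (c |: (y |: A)) -> up A c = up (y |: A) c.
Proof.
move=> vA cA yA cy vCY.
have sA : A \subset c |: (y |: A) by apply/subsetP => a aA; rewrite !inE aA !orbT.
have vC : vtx (c |: A) by apply: (vtxU1_sub vCY) sA; rewrite !inE eqxx.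
have vY : vtx (y |: A) by apply: (vtxU1_sub vCY) sA; rewrite !inE eqxx !orbT.
have cYA : c \notin y |: A by rewrite !inE negb_or cy.
have yCA : y \notin c |: A by rewrite !inE negb_or eq_sym cy.
have := Lset_step vA cA vC; have := Lset_step vA yA vY.
have := Lset_step vY cYA vCY; have := Lset_step vC yCA; rewrite setUCA => /(_ vCY).
have not_both : ~ (Lset (c |: A) = Lset (y |: A) /\ Lset A = Lset (c |: (y |: A))).
  rewrite -(Lvx vA) -(Lvx vC) -(Lvx vY) -(Lvx vCY) => -[eCY eACY].
  apply: (common_nbrs_layers _ _ _ _ _ _ eCY eACY).
  - by rewrite -(inj_eq val_inj) !vxK; apply: contraNneq cYA => <-; rewrite setU11.
  - by rewrite -(inj_eq val_inj) !vxK; apply: contraNneq cA => ->; rewrite setU11.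
  - by rewrite adjVE !vxK adjSC adjS_U1.
  - by rewrite adjVE !vxK adjSC adjS_U1.
  - by rewrite adjVE !vxK setUCA adjS_U1.
  - by rewrite adjVE !vxK adjS_U1.
by rewrite /up => h1 h2 h3 h4; apply/eqP/eqP => h; lia.
Qed.

Lemma up_base B x c : vtx B -> x \in B -> c \notin B -> vtx (c |: B) ->
  up B c = up [set x] c.
Proof.
have [n] := ubnP #|B|; elim: n B => // n IH B /ltnSE cardB vB xB cB vcB.
have [Bx0 | [w /setD1P [wx wB]]] := set_0Vmem (B :\ x).
  by rewrite -(setD1K xB) Bx0 setU0.
set A := B :\ w; have eB : B = w |: A by rewrite setD1K.
have xA : x \in A by rewrite !inE eq_sym wx.
have cA : c \notin A by rewrite !inE negb_and cB orbT.
have vA : vtx A by apply: vtx_sub vB (subsetDl _ _) _; apply/set0Pn; exists x.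
have vcA : vtx (c |: A).
  apply: vtx_sub vcB _ _; first by apply: setUS; apply: subsetDl.
  by apply/set0Pn; exists c; rewrite setU11.
rewrite -(IH _ _ vA xA cA vcA); last by move: cardB; rewrite (cardsD1 w B) wB.
rewrite eB in vcB *; apply/esym/up_square => //; first by rewrite setD11.
by apply: contraNneq cB => ->.
Qed.

Lemma up1_swap a b c : a != b -> c != a -> c != b ->
  ~~ e a b -> ~~ e a c -> ~~ e b c -> up [set a] c = up [set b] c.
Proof.
move=> ab ca cb eab eac ebc.
have vB : vtx (b |: [set a]) by rewrite vtx2 e_sym.
have cB : c \notin b |: [set a] by rewrite !inE negb_or cb ca.
have vcB : vtx (c |: (b |: [set a])).
  by apply: vtxU1 (andP vB).1 _ => y /setU1P [-> | /set1P ->]; rewrite e_sym.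
have aB : a \in b |: [set a] by rewrite !inE eqxx orbT.
by rewrite -(up_base vB aB cB vcB) (up_base vB (setU11 b _) cB vcB).
Qed.

Lemma card_down_nbrs S : vtx S -> 2 <= Lset S ->
  #|[set b in S | vtx (S :\ b) && up (S :\ b) b]| +
  #|[set c | [&& c \notin S, vtx (c |: S) & ~~ up S c]]| = Lset S.
Proof.
move=> vS LS2; case: L_layering => _ [_ [_ [_ [down _]]]].
move: (down (vx vS)); rewrite Lvx => /(_ LS2).
rewrite (_ : [set w | _] = [set w | adjV (vx vS) w & Lset (val w) == (Lset S).-1]); last first.
  by apply/setP => w; rewrite !inE LsetE.
rewrite (card_nbr_split (vx vS) (fun W => Lset W == (Lset S).-1)) vxK => <-.
congr (_ + _); apply: eq_card => a; rewrite !inE.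
- case: (boolP (a \in S)) => //= aS; apply: andb_id2l => vSa.
  have := Lset_step vSa (negbT (setD11 a S)); rewrite /up setD1K // => /(_ vS).
  by case/consecutive_eqE.
- apply: andb_id2l => aS; apply: andb_id2l => vaS.
  by case/consecutive_eqE: (Lset_step vS aS vaS).
Qed.

Definition downs x := [set c | [&& c != x, ~~ e x c & ~~ up [set x] c]].

Lemma downsP x c : reflect [/\ c != x, ~~ e x c & ~~ up [set x] c] (c \in downs x).
Proof. by rewrite inE; apply: and3P. Qed.

Lemma card_downs x : 2 <= Lset [set x] -> #|downs x| = Lset [set x].
Proof.
move=> Lx2; rewrite -(card_down_nbrs (vtx1 x) Lx2).
rewrite (_ : [set b in [set x] | _] = set0) ?cards0 ?add0n; last first.
  apply/setP => b; rewrite !inE; apply/negP => /andP [/eqP -> /andP [+ _]].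
  by rewrite setDv /vtx eqxx andbF.
by apply: eq_card => c; rewrite !inE vtx2 [e c x]e_sym.
Qed.

Lemma vtx_add_downs x S : S \subset downs x -> indep e S -> vtx (x |: S).
Proof. by move=> sS iS; apply: vtxU1 iS _ => y /(subsetP sS) /downsP []. Qed.

Lemma Lset_add_downs x S : S \subset downs x -> indep e S ->
  Lset (x |: S) + #|S| = Lset [set x].
Proof.
have [n] := ubnP #|S|; elim: n S => // n IH S /ltnSE cardS sS iS.
have [-> | [c cS]] := set_0Vmem S; first by rewrite setU0 cards0 addn0.
set S' := S :\ c; have cardS' : #|S| = #|S'|.+1 by rewrite (cardsD1 c S) cS.
have sS' : S' \subset downs x := subset_trans (subsetDl _ _) sS.
have iS' : indep e S' := indepS iS (subsetDl _ _).
have [cx _ down_c] := downsP _ _ (subsetP sS c cS).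
have cxS' : c \notin x |: S' by rewrite !inE negb_or cx eqxx.
have eS : x |: S = c |: (x |: S') by rewrite setUCA setD1K.
have vxS' := vtx_add_downs sS' iS'.
have vS : vtx (c |: (x |: S')) by rewrite -eS vtx_add_downs.
have := Lset_down vxS' cxS' vS; rewrite (up_base vxS' (setU11 _ _) cxS' vS) => /(_ down_c).
by rewrite eS cardS' -(IH S' _ sS' iS'); lia.
Qed.

Lemma card_indep_downs x S : S \subset downs x -> indep e S -> #|S| < Lset [set x].
Proof.
by move=> sS iS; have := Lset_gt0 (vtx_add_downs sS iS); have := Lset_add_downs sS iS; lia.
Qed.

Lemma vtx3 x z c : ~~ e z x -> vtx (c |: (z |: [set x])) = ~~ e c z && ~~ e c x.
Proof.
move=> ezx; apply/idP/andP => [vc | [ecz ecx]].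
  by split; apply: vtxU1_nadj vc _; rewrite !inE eqxx ?orbT.
have /andP [iP _] : vtx (z |: [set x]) by rewrite vtx2.
by apply: vtxU1 iP _ => y /setU1P [-> | /set1P ->].
Qed.

Lemma card_set_andb x (b : bool) : #|[set y | (y == x) && b]| = b.
Proof.
case: b; last by apply/eqP; rewrite cards_eq0; apply/eqP/setP => y; rewrite !inE andbF.
by rewrite (_ : [set y | _] = [set x]) ?cards1 //; apply/setP => y; rewrite !inE andbT.
Qed.

Lemma removals_pair x z : z \in downs x ->
  [set b in z |: [set x] | vtx ((z |: [set x]) :\ b) && up ((z |: [set x]) :\ b) b] =
  [set b | (b == x) && up [set z] x].
Proof.
move=> /downsP [zx _ down_z]; apply/setP => b; rewrite !inE.
case: (b =P z) => [-> | _] /=; first by rewrite setU1K ?inE // (negbTE zx) (negbTE down_z) andbF.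
by case: (b =P x) => [-> | //] /=; rewrite setUC setU1K ?vtx1 // inE eq_sym.
Qed.

Lemma additions_pair x z : z != x -> ~~ e z x ->
  [set c | [&& c \notin z |: [set x], vtx (c |: (z |: [set x])) & ~~ up (z |: [set x]) c]] =
  [set c in downs x | (c != z) && ~~ e z c].
Proof.
move=> zx ezx; have vP : vtx (z |: [set x]) by rewrite vtx2.
have upP c : c != z -> c != x -> vtx (c |: (z |: [set x])) ->
    up (z |: [set x]) c = up [set x] c.
  by move=> cz cx vc; apply: up_base; rewrite // !inE ?eqxx ?orbT // negb_or cz.
apply/setP => c; rewrite !inE negb_or; apply/idP/idP.
- move=> /and3P [/andP [cz cx] vc]; rewrite upP // cz cx => ->.
  by move: vc; rewrite vtx3 // [e x c]e_sym [e z c]e_sym => /andP [-> ->].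
- move=> /andP [/and3P [cx exc nup] /andP [cz ezc]].
  have vc : vtx (c |: (z |: [set x])) by rewrite vtx3 // [e c z]e_sym [e c x]e_sym ezc exc.
  by rewrite cz cx vc upP.
Qed.

Lemma card_downs_adj x z : 3 <= Lset [set x] -> z \in downs x ->
  #|[set c in downs x | e z c]| = up [set z] x.
Proof.
move=> Lx3 zD; have [zx exz down_z] := downsP _ _ zD.
have ezx : ~~ e z x by rewrite e_sym.
have zNx : z \notin [set x] by rewrite inE.
have vP : vtx (z |: [set x]) by rewrite vtx2.
have LP := Lset_down (vtx1 x) zNx vP down_z.
have LP2 : 1 < Lset (z |: [set x]) by lia.
move: (card_down_nbrs vP LP2).
rewrite removals_pair // additions_pair // card_set_andb.
set A := [set c in downs x | (c != z) && ~~ e z c] => cnt.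
have DnE : downs x :\: [set c | e z c] = z |: A.
  apply/setP => c; rewrite in_setD in_setU1 [c \in A]inE [c \in [set _ | _]]inE.
  by case: (c =P z) => [-> | /eqP cz] /=; [rewrite zD e_irr | rewrite andbC].
have zA : z \notin A by rewrite inE eqxx andbF.
have := cardsID [set c | e z c] (downs x).
rewrite DnE cardsU1 zA add1n (card_downs (ltnW Lx3)) LP.
by rewrite (_ : downs x :&: _ = [set c in downs x | e z c]); [lia | apply/setP => c; rewrite !inE].
Qed.

Lemma setU1D1 x S b : b != x -> (x |: S) :\ b = x |: (S :\ b).
Proof.
move=> bx; apply/setP => y; rewrite !inE.
by case: (y =P b) => [-> | _]; rewrite ?eqxx ?(negbTE bx).
Qed.

(* Take [S] maximal among the independent subsets of [downs x] containing [z].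
   If [{z}] were below [{z, x}], then [x + S] would lie in a layer [>= 2] but
   have [S] as its only neighbour one layer below. *)
Lemma downs_up1F x z : 2 <= Lset [set x] -> z \in downs x -> up [set z] x = false.
Proof.
move=> Lx2 zD; apply/negbTE/negP => up_zx.
pose indep_downs S := (S \subset downs x) && indep e S.
have [S /maxsetP [/andP [sS iS] maxS]] : {S | maxset indep_downs S & [set z] \subset S}.
  by apply: maxset_exists; rewrite /indep_downs sub1set zD (andP (vtx1 z)).1.
rewrite sub1set => zS.
have vS : vtx S by rewrite /vtx iS; apply/set0Pn; exists z.
have xS : x \notin S by apply/negP => /(subsetP sS) /downsP []; rewrite eqxx.
have vB := vtx_add_downs sS iS.
have LB2 : 2 <= Lset (x |: S).
  have := Lset_gt0 vS; move: up_zx; rewrite -(up_base vS zS xS vB) /up => /eqP ->; lia.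
have no_add : [set c | [&& c \notin x |: S, vtx (c |: (x |: S)) & ~~ up (x |: S) c]] = set0.
  apply/setP => c; rewrite !inE negb_or; apply/negP => /and3P [/andP [cx cS] vcB].
  rewrite (up_base vB (setU11 _ _) _ vcB) ?inE ?negb_or ?cx // => down_c.
  have cD : c \in downs x.
    by apply/downsP; split => //; rewrite e_sym; apply: vtxU1_nadj vcB _; rewrite setU11.
  have icS : indep_downs (c |: S).
    rewrite /indep_downs subUset sub1set cD sS.
    by apply: indepS (andP vcB).1 _; apply: setUS; apply: subsetUr.
  by move/(maxS _ icS): (subsetUr [set c] S) => /setP /(_ c); rewrite setU11 (negbTE cS).
have rem_x : [set b in x |: S | vtx ((x |: S) :\ b) && up ((x |: S) :\ b) b] \subset [set x].
  apply/subsetP => b; rewrite !inE => /andP [/orP [// | bS] /andP [vBb]].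
  have bx : b != x by apply: contraNneq xS => <-.
  have [_ _ down_b] := downsP _ _ (subsetP sS b bS).
  rewrite setU1D1 // in vBb *; rewrite (up_base vBb (setU11 x _)) ?(negbTE down_b) //.
    by rewrite !inE negb_or bx eqxx.
  by rewrite -setU1D1 // setD1K // in_setU1 bS orbT.
have := card_down_nbrs vB LB2; rewrite no_add cards0 addn0.
by have := subset_leq_card rem_x; rewrite cards1; lia.
Qed.

Lemma Lset1_le2 x : Lset [set x] <= 2.
Proof.
rewrite leqNgt; apply/negP => Lx3.
suff /(card_indep_downs (subxx _)) : indep e (downs x).
  by rewrite (card_downs (ltnW Lx3)) ltnn.
apply/indepP => c d cD dD; apply/negP => ecd.
have : 0 < #|[set c' in downs x | e c c']| by apply/card_gt0P; exists d; rewrite inE dD ecd.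
by rewrite card_downs_adj // downs_up1F // ltnW.
Qed.

Lemma downs_adj x y1 y2 : Lset [set x] = 2 ->
  y1 \in downs x -> y2 \in downs x -> y1 != y2 -> e y1 y2.
Proof.
move=> Lx yD1 yD2 y12; apply/negPn/negP => ne.
have i12 : indep e [set y1; y2].
  by apply/indepP => a b /set2P [] -> /set2P [] ->; rewrite ?e_irr // e_sym.
have s12 : [set y1; y2] \subset downs x by rewrite subUset !sub1set yD1 yD2.
by have := card_indep_downs s12 i12; rewrite cards2 y12 Lx.
Qed.

Lemma Lset_downs x y : Lset [set x] = 2 -> y \in downs x -> Lset (y |: [set x]) = 1.
Proof.
move=> Lx /downsP [yx exy down_y].
have yNx : y \notin [set x] by rewrite inE.
have vP : vtx (y |: [set x]) by rewrite vtx2 e_sym.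
by have := Lset_down (vtx1 x) yNx vP down_y; rewrite Lx; lia.
Qed.

Lemma nadj_downs x c : Lset [set x] = 2 -> c != x -> ~~ e x c -> c \in downs x.
Proof.
move=> Lx cx exc; apply/downsP; split => //; apply/negP => up_xc.
set P := c |: [set x].
have cNx : c \notin [set x] by rewrite inE.
have vP : vtx P by rewrite vtx2 e_sym.
have LP : Lset P = 3 by move/eqP: up_xc; rewrite Lx.
have up_cx : up [set c] x.
  have xNc : x \notin [set c] by rewrite inE eq_sym.
  have vP' : vtx (x |: [set c]) by rewrite vtx2.
  have := Lset_step (vtx1 c) xNc vP'; have := Lset1_le2 c.
  by rewrite /up setUC -/P LP; lia.
have ecx : ~~ e c x by rewrite e_sym.
have := card_down_nbrs vP; rewrite LP additions_pair // => /(_ isT).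
rewrite (_ : [set d in downs x | _] = set0) ?cards0 ?addn0.
  have : #|[set b in P | vtx (P :\ b) && up (P :\ b) b]| <= #|P|.
    by apply: subset_leq_card; apply/subsetP => b; rewrite inE => /andP [].
  by rewrite cards2 cx; lia.
apply/setP => d; rewrite in_set0; apply/negP => /setIdP [dD /andP [dc ecd]].
have [dx exd _] := downsP _ _ dD.
have xd : x != d by rewrite eq_sym.
have xc : x != c by rewrite eq_sym.
have edc : ~~ e d c by rewrite e_sym.
have edx : ~~ e d x by rewrite e_sym.
by have := up1_swap dc xd xc edc edx ecx; rewrite downs_up1F ?Lx // up_cx.
Qed.

Lemma pair_layer1 x y : x != y -> ~~ e x y -> Lset [set x; y] = 1 ->
  Lset [set x] = 2 /\ y \in downs x.
Proof.
move=> xy exy Lxy.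
have yNx : y \notin [set x] by rewrite inE eq_sym.
have vyx : vtx (y |: [set x]) by rewrite vtx2 e_sym.
have step := Lset_step (vtx1 x) yNx vyx; rewrite [y |: _]setUC Lxy in step.
have Lx : Lset [set x] = 2 by have := Lset_gt0 (vtx1 x); lia.
split=> //; apply/downsP; split=> //; first by rewrite eq_sym.
by rewrite /up [y |: _]setUC Lxy Lx.
Qed.

Lemma pair_layer1_maximal x y c : x != y -> ~~ e x y -> Lset [set x; y] = 1 ->
  c \notin [set x; y] -> ~~ vtx (c |: [set x; y]).
Proof.
move=> xy exy Lxy; rewrite !inE negb_or => /andP [cx cy]; apply/negP => vc.
have [Lx yD] := pair_layer1 xy exy Lxy.
have ecy : ~~ e c y by apply: vtxU1_nadj vc _; rewrite !inE eqxx orbT.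
have exc : ~~ e x c by rewrite e_sym; apply: vtxU1_nadj vc _; rewrite !inE eqxx.
by rewrite (downs_adj Lx (nadj_downs Lx cx exc) yD cy) in ecy.
Qed.

(* Singletons in layer 2 and pairs in layer 1, as in the second layering that
   exists when [G] is the complement of a cycle. *)
Definition exceptional (u : V) :=
  (#|val u| == 1) && (L u == 2) || (#|val u| == 2) && (L u == 1).

Lemma exceptionalP (u : V) : exceptional u ->
  (exists2 x, val u = [set x] & Lset [set x] = 2) \/
  (exists x y, [/\ val u = [set x; y], x != y, ~~ e x y & Lset [set x; y] = 1]).
Proof.
case/orP => [/andP [/cards1P [x ex] /eqP Lu] | /andP [/cards2P [x [y [xy ex]]] /eqP Lu]];
  rewrite -LsetE ex in Lu; [left; exists x | right; exists x, y; split] => //.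
by have /andP [/indepP iu _] := valP u; apply: iu; rewrite ex !inE eqxx ?orbT.
Qed.

Lemma exceptional_nbr u w : exceptional u -> adjV u w -> exceptional w.
Proof.
have vw : vtx (val w) := valP w.
move=> /exceptionalP [[x ex Lx] | [x [y [ex xy exy Lxy]]]];
  rewrite adjVE ex => /adjSP [[c cN ew] | [b bN ew]];
  rewrite ew in vw; rewrite /exceptional -LsetE ew.
- have cx : c != x by move: cN; rewrite inE.
  have exc : ~~ e x c by rewrite e_sym -vtx2.
  have cD := nadj_downs Lx cx exc.
  by rewrite cardsU1 cN cards1 (Lset_downs Lx cD).
- by move: bN vw; rewrite inE => /eqP ->; rewrite setDv /vtx eqxx andbF.
- by rewrite (negbTE (pair_layer1_maximal xy exy Lxy cN)) in vw.
- have yx : y != x by rewrite eq_sym.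
  have Lyx : Lset [set y; x] = 1 by rewrite setUC.
  move: bN; rewrite !inE => /orP [] /eqP ->.
    by rewrite setU1K ?inE // cards1 (pair_layer1 yx _ Lyx).1 // e_sym.
  by rewrite setUC setU1K ?inE // cards1 (pair_layer1 xy exy Lxy).1.
Qed.

Lemma exceptional_deg2 u : exceptional u -> #|[set w | adjV u w]| = 2.
Proof.
have -> : #|[set w | adjV u w]| = #|[set w | adjV u w & true]|.
  by apply: eq_card => w; rewrite !inE andbT.
rewrite (card_nbr_split u (fun _ => true)).
case/exceptionalP => [[x -> Lx] | [x [y [-> xy exy Lxy]]]].
- rewrite (_ : [set b in _ | _] = set0) ?cards0 ?add0n; last first.
    apply/setP => b; rewrite !inE; apply/negP => /andP [/eqP -> /andP [+ _]].
    by rewrite setDv /vtx eqxx andbF.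
  rewrite -[RHS]Lx -card_downs ?Lx //; apply: eq_card => c.
  rewrite [in LHS]inE in_set1 vtx2 andbT.
  apply/andP/idP => [[cx ecx] | /downsP [cx exc _]]; last by rewrite [e c x]e_sym.
  by apply: nadj_downs; rewrite // e_sym.
- rewrite (_ : [set c | [&& c \notin [set x; y], _ & _]] = set0) ?cards0 ?addn0; last first.
    apply/setP => c; rewrite in_set0 in_set andbT; apply/negP => /andP [cN].
    by move=> vc; move: (pair_layer1_maximal xy exy Lxy cN); rewrite vc.
  rewrite (_ : [set b in _ | _] = [set x; y]) ?cards2 ?xy //.
  apply/setP => b; rewrite inE andbT.
  apply: andb_idr; rewrite !inE => /orP [] /eqP ->; first by rewrite setU1K ?inE ?vtx1.
  by rewrite setUC setU1K ?inE 1?eq_sym ?vtx1.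
Qed.

Hypothesis no_even_cycle : forall v : V, ~ is_even_cycle adjV (component adjV v).

Lemma Lset1 x : Lset [set x] = 1.
Proof.
have := Lset_gt0 (vtx1 x); have := Lset1_le2 x.
case: (ltngtP (Lset [set x]) 2) => [? _ ? | // | Lx _ _]; first lia.
have x_exceptional : exceptional (vx (vtx1 x)) by rewrite /exceptional vxK cards1 Lvx Lx.
exfalso; apply: no_even_cycle.
exact: (even_cycle_component adjV_sym adjV_irr (colour := fun u => odd #|val u|) adjV_odd
  exceptional_deg2 exceptional_nbr x_exceptional).
Qed.

Lemma up1 x c : c != x -> ~~ e x c -> up [set x] c.
Proof.
move=> cx exc; have cN : c \notin [set x] by rewrite inE.
have vc : vtx (c |: [set x]) by rewrite vtx2 e_sym.
by have := Lset_step (vtx1 x) cN vc; have := Lset_gt0 vc; rewrite /up Lset1; lia.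
Qed.

Lemma Lset_card S : vtx S -> Lset S = #|S|.
Proof.
have [n] := ubnP #|S|; elim: n S => // n IH S /ltnSE cardS vS.
have [x xS] : exists x, x \in S by apply/set0Pn; case/andP: vS.
have [Sx0 | [c /setD1P [cx cS]]] := set_0Vmem (S :\ x).
  by rewrite -(setD1K xS) Sx0 setU0 Lset1 cards1.
set S' := S :\ c; have eS : S = c |: S' by rewrite setD1K.
have xS' : x \in S' by rewrite !inE eq_sym cx.
have cS' : c \notin S' by rewrite setD11.
have vS' : vtx S' by apply: vtx_sub vS (subsetDl _ _) _; apply/set0Pn; exists x.
have exc : ~~ e x c by case/andP: vS => /indepP iS _; apply: iS.
have up_c : up S' c by rewrite (up_base vS' xS') ?up1 // -eS.
have cardS' : #|S| = #|S'|.+1 by rewrite eS cardsU1 cS'.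
move/eqP: up_c; rewrite -eS => ->.
by rewrite cardS' (IH S') // -cardS'.
Qed.

End Layering.
End IndependenceComplex.

Theorem lemma4p4 (T : finType) (e : rel T) (HG : simple_graph e)
  (Hcyc : forall v : IAR_vert e,
            ~ is_even_cycle (@IAR_adj T e) (component (@IAR_adj T e) v)) :
  forall (p : nat) (L : IAR_vert e -> nat),
    is_layering (@IAR_adj T e) p L <->
    (p = alpha e /\ forall A : IAR_vert e, L A = #|val A|).
Proof.
case: HG => e_sym e_irr p L; split=> [L_layering | [-> LE]]; last exact: natural_layering.
have LE (A : IAR_vert e) : L A = #|val A|.
  by rewrite -(LsetE L A) (Lset_card e_sym e_irr L_layering Hcyc (valP A)).
by split=> //; apply: layering_card_alpha L_layering LE.
Qed.
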